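(* Let $R=K[x_1,\ldots,x_n]$ be a polynomial ring over a field $K$ with its $\mathbb{N}^n$-grading, and let $M$ be a nonzero squarefree $R$-module. If $M_0=0$ (the component of degree $0\in\mathbb{N}^n$), then $\operatorname{depth} M>0$.
   Context: An $\mathbb{N}^n$-graded $R$-module $M$ (with $\deg x_j=e_j$, the $j$-th unit vector) is squarefree if, for all $\alpha=(\alpha_1,\ldots,\alpha_n)\in\mathbb{N}^n$ and all $j$, multiplication by $x_j$ from $M_\alpha$ to $M_{\alpha+e_j}$ is bijective whenever $\alpha_j\neq 0$. Depth is taken with respect to $\mathfrak{m}=(x_1,\ldots,x_n)$. *)

From HB Require Import structures.
From mathcomp Require Import all_boot all_order all_algebra.
From mathcomp Require Export mpoly.
Set Implicit Arguments. Unset Strict Implicit. Unset Printing Implicit Defensive.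
Import Order.TTheory GRing.Theory.
Local Open Scope ring_scope.

Section Defs.
Variables (K : fieldType) (n : nat) (M : lmodType {mpoly K[n]}).

(* An N^n-grading on the R-module M (R = K[x_1..x_n]), given by the family of
   projections comp a : M -> M onto the homogeneous components M_a, a in N^n. *)
Definition Nn_grading (comp : 'X_{1..n} -> M -> M) : Prop :=
  [/\ (forall a m1 m2, comp a (m1 + m2) = comp a m1 + comp a m2),
      (forall a (c : K) m, comp a (c%:MP *: m) = c%:MP *: comp a m),
      (forall a b m, comp a (comp b m) = if a == b then comp b m else 0),
      (forall m, exists2 s : seq 'X_{1..n}, uniq s & m = \sum_(a <- s) comp a m)
    & (forall (j : 'I_n) a m,
          comp (a + U_(j))%MM ('X_j *: comp a m) = 'X_j *: comp a m)].

Definition fin_gen_mod : Prop :=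
  exists gs : seq M, forall m, exists f : 'I_(size gs) -> {mpoly K[n]},
    m = \sum_(i < size gs) f i *: gs`_i.

Definition squarefree_mod (comp : 'X_{1..n} -> M -> M) : Prop :=
  forall (a : 'X_{1..n}) (j : 'I_n), a j <> 0%N ->
    (forall m, comp a m = m -> 'X_j *: m = 0 -> m = 0) /\
    (forall m', comp (a + U_(j))%MM m' = m' ->
       exists m, comp a m = m /\ 'X_j *: m = m').

Definition M_regular (f : {mpoly K[n]}) : Prop :=
  (forall m : M, f *: m = 0 -> m = 0) /\ (exists m : M, forall m', m <> f *: m').

(* depth M > 0 (depth w.r.t. m = (x_1..x_n), as the supremum of lengths of
   M-regular sequences in m): there is an M-regular element in m. *)
Definition depth_pos : Prop :=
  exists f : {mpoly K[n]}, f@_0%MM = 0 /\ M_regular f.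

End Defs.

(* Let f = x_1 + ... + x_n.  The component of f m in degree b is the sum of the
   x_k m_(b - e_k); this drives both halves of regularity.  If f m = 0 with m a
   nonzero element, fix a coordinate j on which its support is not identically
   zero (possible since M_0 = 0) and a support degree a with a_j maximal: in
   degree a + e_j only x_j m_a survives, and it is nonzero by squarefreeness.
   And a nonzero homogeneous element of minimal total degree is not in f M,
   since in that degree f M only sees components of M of lower degree, which
   all vanish. *)
From HB Require Import structures.
From mathcomp Require Import all_boot all_order all_algebra.
From mathcomp Require Import mpoly.
From Stdlib Require Import Classical Wf_nat.

Set Implicit Arguments.
Unset Strict Implicit.
Unset Printing Implicit Defensive.

Local Open Scope ring_scope.
Import GRing.Theory.

Lemma ex_argmax_seq (T : eqType) (P : pred T) (w : T -> nat) (s : seq T) :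
  has P s -> exists2 a, (a \in s) && P a & forall c, c \in s -> P c -> (w c <= w a)%N.
Proof.
move=> hasPs; pose Q k := has (fun c => P c && (w c == k)) s.
have exQ : exists k, Q k.
  by case/hasP: hasPs => a ains Pa; exists (w a); apply/hasP; exists a; rewrite ?Pa ?eqxx.
have ubQ k : Q k -> (k <= \max_(c <- s) w c)%N.
  by case/hasP=> c cs /andP[_ /eqP <-]; apply: leq_bigmax_seq.
case: (ex_maxnP exQ ubQ) => k /hasP[a ains /andP[Pa /eqP wa]] kmax.
exists a; first by rewrite ains Pa.
by move=> c cs Pc; rewrite wa; apply: kmax; apply/hasP; exists c; rewrite ?Pc ?eqxx.
Qed.

Definition sum_vars (K : fieldType) (n : nat) : {mpoly K[n]} := \sum_(j < n) 'X_j.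

Lemma sum_vars_coeff0 (K : fieldType) (n : nat) : (sum_vars K n)@_0%MM = 0.
Proof. by rewrite raddf_sum big1 // => j _ /=; rewrite mcoeffX mnm1_eq0. Qed.

Section GradedModule.
Variables (K : fieldType) (n : nat) (M : lmodType {mpoly K[n]}).
Variable comp : 'X_{1..n} -> M -> M.
Hypothesis grading : Nn_grading comp.

Lemma comp0 a : comp a 0 = 0.
Proof.
have [compD _ _ _ _] := grading.
by apply: (addrI (comp a 0)); rewrite -compD !addr0.
Qed.

Lemma comp_sum a (I : Type) (r : seq I) (P : pred I) (F : I -> M) :
  comp a (\sum_(i <- r | P i) F i) = \sum_(i <- r | P i) comp a (F i).
Proof. by have [compD _ _ _ _] := grading; apply: (big_morph _ (compD a) (comp0 a)). Qed.

Lemma comp_decomp m :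
  exists2 s : seq 'X_{1..n}, uniq s & m = \sum_(c <- s) comp c m.
Proof. by have [_ _ _ dec _] := grading; apply: dec. Qed.

Lemma comp_id a m : comp a (comp a m) = comp a m.
Proof. by have [_ _ compK _ _] := grading; rewrite compK eqxx. Qed.

Lemma comp_notin a m s : m = \sum_(c <- s) comp c m -> a \notin s -> comp a m = 0.
Proof.
have [_ _ compK _ _] := grading.
move=> Hm anots; rewrite Hm comp_sum big1_seq // => c /andP[_ cs].
by rewrite compK; case: eqP => // ac; rewrite ac cs in anots.
Qed.

Lemma ex_comp_neq0 m : m != 0 -> exists a, comp a m != 0.
Proof.
move=> /eqP mnz; have [s _ Hm] := comp_decomp m.
have [/hasP[a _ anz] | /hasPn all0] := boolP (has (fun a => comp a m != 0) s).
  by exists a.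
by case: mnz; rewrite Hm big_seq big1 // => c /all0 /negPn /eqP.
Qed.

Lemma ex_comp_argmax (w : 'X_{1..n} -> nat) m a0 : comp a0 m != 0 ->
  exists2 a, comp a m != 0 & forall c, (w a < w c)%N -> comp c m = 0.
Proof.
move=> a0nz; have [s _ Hm] := comp_decomp m.
have a0s : a0 \in s by apply: contraNT a0nz => a0s; rewrite (comp_notin Hm a0s).
have [|a /andP[_ anz] amax] := @ex_argmax_seq _ (fun c => comp c m != 0) w s.
  by apply/hasP; exists a0.
exists a => // c wac; apply/eqP; apply: contraTT wac => cnz; rewrite -leqNgt.
apply: (amax _ _ cnz); apply: contraNT cnz => cs; by rewrite (comp_notin Hm cs).
Qed.

Lemma comp_scaleX (k : 'I_n) b m : comp b ('X_k *: m) =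
  if (U_(k) <= b)%MM then 'X_k *: comp (b - U_(k)) m else 0.
Proof.
have [_ _ compK _ compX] := grading; have [s us Hm] := comp_decomp m.
have compXc c : comp b ('X_k *: comp c m) =
    if b == (c + U_(k))%MM then 'X_k *: comp c m else 0.
  by rewrite -compX compK; case: eqP => // <-; rewrite compX.
rewrite {1}Hm scaler_sumr comp_sum (eq_bigr _ (fun c _ => compXc c)).
case: ifPn => [Ukb | Ukb]; last first.
  by rewrite big1 // => c _; case: eqP => // bE; rewrite bE lem_addl in Ukb.
have eq_pred c : (b == c + U_(k))%MM = (c == b - U_(k))%MM.
  by apply/eqP/eqP => [->|->]; rewrite ?addmK ?submK.
rewrite (eq_bigr (fun c => if c == (b - U_(k))%MM then 'X_k *: comp c m else 0));
  last by move=> c _; rewrite eq_pred.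
rewrite -big_mkcond; have [bs | bs] := boolP ((b - U_(k))%MM \in s).
  by rewrite -big_filter filter_pred1_uniq // big_seq1.
by rewrite (comp_notin Hm bs) scaler0 big1_seq // => c /andP[/eqP -> cs]; rewrite cs in bs.
Qed.

Lemma comp_scale_sum_vars b m : comp b (sum_vars K n *: m) =
  \sum_(k < n | (U_(k) <= b)%MM) 'X_k *: comp (b - U_(k)) m.
Proof.
rewrite scaler_suml comp_sum [RHS]big_mkcond.
by apply: eq_bigr => k _; rewrite comp_scaleX.
Qed.

Lemma ex_homog_min_mdeg : (exists m : M, m != 0) ->
  exists a m, [/\ comp a m = m, m != 0 &
    forall c m', (mdeg c < mdeg a)%N -> comp c m' = 0].
Proof.
move=> [m0 m0nz].
pose P d := exists a m, mdeg a = d /\ comp a m != 0.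
have exP : exists d, P d.
  by have [a anz] := ex_comp_neq0 m0nz; exists (mdeg a), a, m0.
have [d [[[a [m [da anz]]] dmin] _]] :=
  dec_inh_nat_subset_has_unique_least_element P (fun d => classic (P d)) exP.
exists a, (comp a m); split => //; first exact: comp_id.
move=> c m' cd; apply/eqP; apply: contraTT cd => cnz; rewrite -leqNgt da.
by apply/leP/dmin; exists c, m'.
Qed.

Lemma sum_vars_scale_not_onto : (exists m : M, m != 0) ->
  exists m : M, forall m', m <> sum_vars K n *: m'.
Proof.
case/ex_homog_min_mdeg=> a [m [am mnz lowdeg]]; exists m => m' Em.
move/eqP: mnz; apply; rewrite -am Em comp_scale_sum_vars big1 // => k Uka.
by rewrite lowdeg ?scaler0 // -{2}(submK Uka) mdegD mdeg1 addn1.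
Qed.

Hypothesis sqfree : squarefree_mod comp.
Hypothesis comp0_eq0 : forall m, comp 0%MM m = 0.

Lemma sum_vars_scale_inj0 (m : M) : sum_vars K n *: m = 0 -> m = 0.
Proof.
move=> fm0; apply/eqP; apply: contraT => mnz.
have [a0 a0nz] := ex_comp_neq0 mnz.
have [j a0j] : exists j, a0 j != 0%N.
  apply/existsP; apply: contraNT a0nz => /existsPn a0_0.
  suff -> : a0 = 0%MM by rewrite comp0_eq0.
  by apply/mnmP => i; rewrite mnm0E; apply/eqP; have := a0_0 i; rewrite negbK.
have [a anz amax] := ex_comp_argmax (fun c => c j) a0nz.
have a0a : (a0 j <= a j)%N by rewrite leqNgt; apply: contra a0nz => /amax ->.
have aj : a j != 0%N by rewrite -lt0n (leq_trans _ a0a) // lt0n.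
have Xa0 : 'X_j *: comp a m = 0.
  have := congr1 (comp (a + U_(j))%MM) fm0.
  rewrite comp0 comp_scale_sum_vars (bigD1 j) ?lem_addl //= addmK big1 ?addr0 //.
  move=> k /andP[_ kj]; rewrite amax ?scaler0 //.
  by rewrite mnmBE mnmDE !mnm1E eqxx (negbTE kj) subn0 addn1.
have [sqf_inj _] := sqfree (elimN eqP aj).
by move: anz; rewrite (sqf_inj _ (comp_id a m) Xa0) eqxx.
Qed.

End GradedModule.

Theorem lemma3p1 (K : fieldType) (n : nat) (M : lmodType {mpoly K[n]})
    (comp : 'X_{1..n} -> M -> M) :
  Nn_grading comp -> fin_gen_mod M -> squarefree_mod comp ->
  (exists m : M, m <> 0) ->
  (forall m : M, comp 0%MM m = 0) ->
  depth_pos M.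
Proof.
move=> grading _ sqfree [m0 /eqP m0nz] comp0_eq0.
exists (sum_vars K n); split; first exact: sum_vars_coeff0.
split; first exact: (sum_vars_scale_inj0 grading sqfree comp0_eq0).
by apply: (sum_vars_scale_not_onto grading); exists m0.
Qed.
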